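(* Fix $\lambda\in\mathbb R$, integers $j\ge i\ge1$, and $y'>y>0$. Then almost surely $b^{\lambda,y'}_j-b^{\lambda,y}_j\ \ge\ b^{\lambda,y'}_i-b^{\lambda,y}_i$.
   Context: Last passage percolation (LPP): for a sequence $f=(f_1,f_2,\dots)$ of continuous functions on $\mathbb R$, $y\le x$ and $n\ge m$, an up-right path $\gamma$ from $(y,n)$ to $(x,m)$ is specified by jump times $y=t_{n+1}\le t_n\le\dots\le t_{m+1}\le t_m=x$; its weight is $f[\gamma]=\sum_{i=m}^n(f_i(t_i)-f_i(t_{i+1}))$, and $f[(y,n)\to(x,m)]=\sup_\gamma f[\gamma]$. The parabolic Airy line ensemble $\mathcal P=(\mathcal P_1,\mathcal P_2,\dots)$ is the random collection of continuous non-intersecting curves $\mathcal P_1>\mathcal P_2>\cdots$ on $\mathbb R$ such that for all $m$ and $t_1<\dots<t_m$ the point process $\{(\mathcal P_i(t_j)+t_j^2,t_j)\}$ is determinantal with the extended Airy kernel $K((x,t);(y,s))=\int_0^\infty e^{-u(t-s)}\mathrm{Ai}(x+u)\mathrm{Ai}(y+u)\,du$ for $t\ge s$ and $-\int_{-\infty}^0 e^{-u(t-s)}\mathrm{Ai}(x+u)\mathrm{Ai}(y+u)\,du$ for $t<s$. The parabolic Airy sheet $\mathcal S:\mathbb R^2\to\mathbb R$ is the continuous random process (unique in law) such that (i) $\mathcal S(\cdot+z,\cdot+z)\overset{d}{=}\mathcal S$ for every $z$, and (ii) $\mathcal S$ can be coupled with $\mathcal P$ so that $\mathcal S(0,\cdot)=\mathcal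 P_1$ and, a.s., for all rational $x,y,z$ with $y>0$ there is a random $K$ with $\mathcal S(y,z)-\mathcal S(y,x)=\mathcal P[(y)_k\to(z,1)]-\mathcal P[(y)_k\to(x,1)]$ for $k\ge K$, where $(y)_k=(-(k/(2y))^{1/2},k)$. We work with $\mathcal S$ and $\mathcal P$ coupled in this way. Boundary data: for $\lambda\in\mathbb R$, $y>0$, $i\in\mathbb N$, $b^{\lambda,y}_i=\lim_{k\to\infty}\big(\mathcal P[(y)_k\to(\lambda,i)]-\mathcal P[(y)_k\to(\lambda,1)]+\mathcal S(y,\lambda)\big)$; it is known that for fixed $\lambda,y$ these limits exist and are finite almost surely (indeed the sequence is eventually constant in $k$). *)

From HB Require Import structures.
From mathcomp Require Import all_boot all_order all_algebra.
From mathcomp Require Import all_classical all_reals all_analysis.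
Set Implicit Arguments. Unset Strict Implicit. Unset Printing Implicit Defensive.
Import Order.TTheory GRing.Theory Num.Theory.
Import numFieldNormedType.Exports.
Local Open Scope classical_set_scope.
Local Open Scope ring_scope.

Section Defs.
Variable R : realType.

Definition Ai (x : R) : R :=
  lim ((fun T : R => pi^-1 *
          fine (\int[@lebesgue_measure R]_(u in `[0%R, T]) (cos (u ^+ 3 / 3 + x * u))%:E))
       @ +oo).

Definition airy_kernel (x t y s : R) : R :=
  if s <= t then
    fine (\int[@lebesgue_measure R]_(u in `[0%R, +oo[)
            (expR (- u * (t - s)) * Ai (x + u) * Ai (y + u))%:E)
  else
    - fine (\int[@lebesgue_measure R]_(u in `]-oo, 0%R[)
            (expR (- u * (t - s)) * Ai (x + u) * Ai (y + u))%:E).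

Fixpoint iint (k : nat) (F : (nat -> R) -> \bar R) : \bar R :=
  match k with
  | 0 => F (fun _ => 0)
  | k'.+1 => (\int[@lebesgue_measure R]_(z in setT)
                iint k' (fun v => F (fun i => if i == k' then z else v i)))%E
  end.

(** Last passage value f[(y,n) -> (x,m)] for f = (f_1, f_2, ...) (index 0 unused):
    sup over jump times y = t_{n+1} <= t_n <= ... <= t_{m+1} <= t_m = x of
    sum_{i=m}^n (f_i(t_i) - f_i(t_{i+1})). *)
Definition lpp (f : nat -> R -> R) (y : R) (n : nat) (x : R) (m : nat) : R :=
  sup [set w : R | exists t : nat -> R,
         [/\ t n.+1 = y, t m = x,
             (forall i, (m <= i <= n)%N -> t i.+1 <= t i) &
             w = \sum_(m <= i < n.+1) (f i (t i) - f i (t i.+1))]].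

(** x-coordinate of the point (y)_k = (-(k/(2y))^{1/2}, k) *)
Definition ykx (y : R) (k : nat) : R := - Num.sqrt (k%:R / (2 * y)).

Variables (d : measure_display) (Omega : measurableType d).

(** P w i t = P_i(t) at outcome w, for i >= 1 (index 0 unused). *)
Definition is_parabolic_airy_line_ensemble (Pr : probability Omega R)
    (P : Omega -> nat -> R -> R) : Prop :=
  [/\ (forall w i, continuous (P w i)),
      (forall w i t, (1 <= i)%N -> P w i.+1 t < P w i t),
      (forall i t, measurable_fun setT (fun w => P w i t)) &
      (* determinantal structure of {(P_i(t_j) + t_j^2, t_j)} with the extended
         Airy kernel, via its correlation functions w.r.t. Lebesgue x counting
         measure, tested on product sets *)
      forall (m : nat) (t : 'I_m -> R), (forall a b : 'I_m, (a < b)%N -> t a < t b) ->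
      forall (k : nat) (js : 'I_k -> 'I_m) (B : 'I_k -> set R),
        (forall a, measurable (B a)) ->
        (\int[Pr]_w
           (\esum_(ii in [set ii : 'I_k -> nat |
                            injective (fun a => (ii a, js a)) /\ forall a, (1 <= ii a)%N])
              (\prod_(a < k) \1_(B a) (P w (ii a) (t (js a)) + t (js a) ^+ 2))%:E))%E
        = iint k (fun x => (\prod_(a < k) \1_(B a) (x a) *
              \det (\matrix_(a < k, b < k)
                      airy_kernel (x a) (t (js a)) (x b) (t (js b))))%:E)].

Definition is_rat (x : R) : Prop := exists q : rat, x = ratr q.

Definition is_airy_sheet_coupled (Pr : probability Omega R)
    (P : Omega -> nat -> R -> R) (S : Omega -> R -> R -> R) : Prop :=
  [/\ (forall w, continuous (fun p : R * R => S w p.1 p.2)),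
      (forall x y, measurable_fun setT (fun w => S w x y)),
      (* (i) S(. + z, . + z) =d S  (equality of finite-dimensional laws) *)
      (forall (z : R) (n : nat) (xs ys : 'I_n -> R) (B : 'I_n -> set R),
         (forall a, measurable (B a)) ->
         Pr [set w | forall a, B a (S w (xs a + z) (ys a + z))]
         = Pr [set w | forall a, B a (S w (xs a) (ys a))]),
      {ae Pr, forall w, S w 0 = P w 1%N} &
      {ae Pr, forall w, forall x y z : R, is_rat x -> is_rat y -> is_rat z -> 0 < y ->
         exists K : nat, forall k : nat, (K <= k)%N ->
           S w y z - S w y x = lpp (P w) (ykx y k) k z 1 - lpp (P w) (ykx y k) k x 1}].

Definition bdry_seq (P : Omega -> nat -> R -> R) (S : Omega -> R -> R -> R)
    (w : Omega) (lam y : R) (i : nat) (k : nat) : R :=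
  lpp (P w) (ykx y k) k lam i - lpp (P w) (ykx y k) k lam 1 + S w y lam.

Definition bdata (P : Omega -> nat -> R -> R) (S : Omega -> R -> R -> R)
    (w : Omega) (lam y : R) (i : nat) : R :=
  limn (bdry_seq P S w lam y i).

End Defs.

From HB Require Import structures.
From mathcomp Require Import all_boot all_order all_algebra.
From mathcomp Require Import all_classical all_reals all_analysis.
From mathcomp Require Import lra.
Import Order.TTheory GRing.Theory Num.Theory.
Import numFieldNormedType.Exports.
Local Open Scope classical_set_scope.
Local Open Scope ring_scope.

(* The statement is deterministic once the limits defining
   the boundary data exist: the only probabilistic input used is the given
   almost-sure convergence of the sequences [bdry_seq], together with the
   continuity of the curves of the line ensemble.

   The heart of the argument is the quadrangle (crossing) inequality of last
   passage percolation: for starting points a <= a' <= lam and lines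
   i <= j <= k,
     f[(a',k) -> (lam,i)] + f[(a,k) -> (lam,j)]
       <= f[(a',k) -> (lam,j)] + f[(a,k) -> (lam,i)].
   It is proved by the usual path-swapping argument: two paths from the
   left-hand side must cross at some line r, and exchanging their pieces
   below line r produces two admissible paths for the right-hand side with
   the same total weight.  Continuity of the f_q makes the last passage
   values finite suprema.

   Applied with a = (y)_k, a' = (y')_k (which lie left of lam for large k),
   the terms f[.. -> (lam,1)] and S(y,lam) cancel in the difference of the
   sequences defining b, so the inequality holds for all large k and passes
   to the almost sure limits. *)

Section LastPassage.
Context {R : realType}.
Implicit Types (f : nat -> R -> R) (s t u : nat -> R).

Definition lpp_path (y : R) (n : nat) (x : R) (m : nat) t : Prop :=
  [/\ t n.+1 = y, t m = x & forall q, (m <= q <= n)%N -> t q.+1 <= t q].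

Definition partial_weight f (a b : nat) t : R :=
  \sum_(a <= q < b) (f q (t q) - f q (t q.+1)).

Definition path_weights f y n x m : set R :=
  [set partial_weight f m n.+1 t | t in lpp_path y n x m].

Lemma lppE f y n x m : lpp f y n x m = sup (path_weights f y n x m).
Proof.
congr sup; apply/seteqP; split=> w.
  by move=> [t [? ? ? ->]]; exists t.
by move=> [t [? ? ?] <-]; exists t.
Qed.

Lemma path_antitone {t} {m n p q : nat} :
  (forall r, (m <= r <= n)%N -> t r.+1 <= t r) ->
  (m <= p)%N -> (p <= q)%N -> (q <= n.+1)%N -> t q <= t p.
Proof.
move=> tmon mp; elim: q => [|q IH]; first by rewrite leqn0 => /eqP ->.
rewrite leq_eqVlt => /predU1P [-> //|pq] qn.
apply: le_trans (IH pq (ltnW qn)); apply: tmon.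
by rewrite (leq_trans mp pq).
Qed.

(* The path jumping straight down at x witnesses nonemptiness. *)
Lemma path_weights_n0 f y n x m :
  y <= x -> (m <= n)%N -> path_weights f y n x m !=set0.
Proof.
move=> yx mn; exists (partial_weight f m n.+1 (fun q => if (m < q)%N then y else x)).
exists (fun q => if (m < q)%N then y else x) => //; split.
- by rewrite ltnS mn.
- by rewrite ltnn.
- by move=> q /andP [mq _]; rewrite ltnS mq; case: ifP.
Qed.

(* Every jump time lies in [y, x], so continuous weights are bounded. *)
Lemma path_weights_ub f y n x m :
  (forall q, continuous (f q)) -> y <= x -> has_ubound (path_weights f y n x m).
Proof.
move=> fc yx.
have maxP q : exists c, c \in `[y, x] /\ forall z, z \in `[y, x] -> f q z <= f q c.
  by have [c ? ?] := EVT_max yx (@continuous_subspaceT _ _ _ _ (fc q)); exists c.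
have minP q : exists c, c \in `[y, x] /\ forall z, z \in `[y, x] -> f q c <= f q z.
  by have [c ? ?] := EVT_min yx (@continuous_subspaceT _ _ _ _ (fc q)); exists c.
have [cM HM] := choice maxP; have [cm Hm] := choice minP.
exists (\sum_(m <= q < n.+1) (f q (cM q) - f q (cm q))).
move=> _ [t [tn tm tmon] <-].
have t_in q : (m <= q <= n.+1)%N -> t q \in `[y, x].
  move=> /andP [mq qn]; rewrite in_itv /=; apply/andP; split.
    by rewrite -tn (path_antitone tmon mq qn).
  by rewrite -tm (path_antitone tmon (leqnn m) mq qn).
apply: ler_sum_nat => q /andP [mq qn]; apply: lerB.
  by apply: (HM q).2; apply: t_in; rewrite mq ltnW.
by apply: (Hm q).2; apply: t_in; rewrite (leq_trans mq (leqnSn q)) qn.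
Qed.

Definition splice (r : nat) s u : nat -> R := fun q => if (r < q)%N then s q else u q.

Lemma partial_weight_split f t {m r n : nat} : (m <= r <= n)%N ->
  partial_weight f m n.+1 t =
  partial_weight f m r t + (f r (t r) - f r (t r.+1)) + partial_weight f r.+1 n.+1 t.
Proof.
move=> /andP [mr rn]; rewrite /partial_weight.
rewrite (@big_cat_nat _ _ _ r m n.+1 _ _ mr (leqW rn)) /=.
rewrite (@big_cat_nat _ _ _ r.+1 r n.+1 _ _ (leqnSn r) rn) /=.
by rewrite big_nat1 addrA.
Qed.

Lemma splice_weight f s u {m r n : nat} : (m <= r <= n)%N ->
  partial_weight f m n.+1 (splice r s u) =
  partial_weight f m r u + (f r (u r) - f r (s r.+1)) + partial_weight f r.+1 n.+1 s.
Proof.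
move=> mrn; rewrite (partial_weight_split f (splice r s u) mrn).
have -> : partial_weight f m r (splice r s u) = partial_weight f m r u.
  by apply: eq_big_nat => q /andP [_ qr]; rewrite /splice ltnNge (ltnW qr) ltnNge qr.
have -> : partial_weight f r.+1 n.+1 (splice r s u) = partial_weight f r.+1 n.+1 s.
  by apply: eq_big_nat => q /andP [rq _]; rewrite /splice rq ltnS (ltnW rq).
by rewrite /splice ltnn ltnSn.
Qed.

Lemma splice_path {r s u y} {n : nat} {x} {m : nat} : (m <= r <= n)%N ->
  s n.+1 = y -> u m = x ->
  (forall q, (r < q <= n)%N -> s q.+1 <= s q) ->
  (forall q, (m <= q < r)%N -> u q.+1 <= u q) ->
  s r.+1 <= u r -> lpp_path y n x m (splice r s u).
Proof.
move=> /andP [mr rn] sn um smon umon sur; split.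
- by rewrite /splice ltnS rn.
- by rewrite /splice ltnNge mr.
- move=> q /andP [mq qn]; rewrite /splice.
  case: (ltngtP r q) => [rq|qr|<-].
  + by rewrite ltnS (ltnW rq); apply: smon; rewrite rq.
  + by rewrite ltnNge qr; apply: umon; rewrite mq.
  + by rewrite ltnSn.
Qed.

Lemma discrete_crossing {s u} {j k : nat} : (j <= k)%N -> s j <= u j -> u k.+1 <= s k.+1 ->
  exists r, [/\ (j <= r <= k)%N, s r <= u r & u r.+1 <= s r.+1].
Proof.
move=> jk sj uk; elim: k jk uk => [|k IH] jk uk.
  by move: jk sj; rewrite leqn0 => /eqP -> sj; exists 0%N; split.
have [usk|suk] := leP (u k.+1) (s k.+1).
  move: jk; rewrite leq_eqVlt => /predU1P [jk|jk].
    by subst j; exists k.+1; split; rewrite ?leqnn.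
  have [r [/andP [jr rk] ? ?]] := IH jk usk.
  by exists r; split; rewrite ?jr ?(leqW rk).
by exists k.+1; split; rewrite ?jk ?leqnn ?(ltW suk).
Qed.

Lemma path_swap {f a a' lam} {i j k : nat} : a <= a' -> (i <= j <= k)%N ->
  forall w1 w2, path_weights f a' k lam i w1 -> path_weights f a k lam j w2 ->
  exists v1 v2, [/\ path_weights f a' k lam j v1, path_weights f a k lam i v2
                  & w1 + w2 = v1 + v2].
Proof.
move=> aa' /andP [ij jk] _ _ [s [sk si smon] <-] [u [uk uj umon] <-].
have s_le_u : s j <= u j by rewrite uj -si (path_antitone smon (leqnn i) ij (leqW jk)).
have u_le_s : u k.+1 <= s k.+1 by rewrite sk uk.
have [r [/andP [jr rk] sr ur]] := discrete_crossing jk s_le_u u_le_s.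
have ir := leq_trans ij jr.
have irk : (i <= r <= k)%N by rewrite ir rk.
have jrk : (j <= r <= k)%N by rewrite jr rk.
have s_above q : (r < q <= k)%N -> s q.+1 <= s q.
  by move=> /andP [rq qk]; apply: smon; rewrite qk (leq_trans ir (ltnW rq)).
have u_above q : (r < q <= k)%N -> u q.+1 <= u q.
  by move=> /andP [rq qk]; apply: umon; rewrite qk (leq_trans jr (ltnW rq)).
have s_below q : (i <= q < r)%N -> s q.+1 <= s q.
  by move=> /andP [iq qr]; apply: smon; rewrite iq (ltnW (leq_trans qr rk)).
have u_below q : (j <= q < r)%N -> u q.+1 <= u q.
  by move=> /andP [jq qr]; apply: umon; rewrite jq (ltnW (leq_trans qr rk)).
have s_r : s r.+1 <= s r by apply: smon.
exists (partial_weight f j k.+1 (splice r s u)),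
       (partial_weight f i k.+1 (splice r u s)); split.
- exists (splice r s u) => //.
  exact: splice_path jrk sk uj s_above u_below (le_trans s_r sr).
- exists (splice r u s) => //.
  exact: splice_path irk uk si u_above s_below (le_trans ur s_r).
rewrite (splice_weight f s u jrk) (splice_weight f u s irk).
by rewrite (partial_weight_split f s irk) (partial_weight_split f u jrk); lra.
Qed.

Lemma lpp_quadrangle {f a a' lam} {i j k : nat} : (forall q, continuous (f q)) ->
  a <= a' -> a' <= lam -> (i <= j <= k)%N ->
  lpp f a' k lam i + lpp f a k lam j <= lpp f a' k lam j + lpp f a k lam i.
Proof.
move=> fc aa' a'l ijk; have al := le_trans aa' a'l.
have /andP [ij jk] := ijk; have ik := leq_trans ij jk.
rewrite !lppE.
have ub3 := ub_le_sup (path_weights_ub f a' k lam j fc a'l).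
have ub4 := ub_le_sup (path_weights_ub f a k lam i fc al).
set E1 := path_weights f a' k lam i; set E2 := path_weights f a k lam j.
set E3 := path_weights f a' k lam j; set E4 := path_weights f a k lam i.
have pair_le w1 w2 : E1 w1 -> E2 w2 -> w1 + w2 <= sup E3 + sup E4.
  move=> h1 h2; have [v1 [v2 [h3 h4 ->]]] := path_swap aa' ijk _ _ h1 h2.
  by apply: lerD; [apply: ub3 | apply: ub4].
have sup1_le w2 : E2 w2 -> sup E1 <= sup E3 + sup E4 - w2.
  move=> h2; apply: ge_sup; first exact: path_weights_n0.
  by move=> w1 h1; have := pair_le _ _ h1 h2; lra.
have : sup E2 <= sup E3 + sup E4 - sup E1.
  apply: ge_sup; first exact: path_weights_n0.
  by move=> w2 h2; have := sup1_le _ h2; lra.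
lra.
Qed.

Lemma ykx_le (y y' : R) k : 0 < y -> y <= y' -> ykx y k <= ykx y' k.
Proof.
move=> y0 yy; rewrite /ykx lerN2 ler_sqrt; last first.
  by apply: divr_ge0 => //; rewrite mulr_ge0 // ltW.
apply: ler_wpM2l => //; rewrite lef_pV2 ?posrE; lra.
Qed.

Lemma ykx_eventually_le (y lam : R) : 0 < y -> \forall k \near \oo, ykx y k <= lam.
Proof.
move=> y0; have c_ge0 : 0 <= lam ^+ 2 * (2 * y) by rewrite mulr_ge0 ?sqr_ge0 //; lra.
exists (Num.bound (lam ^+ 2 * (2 * y))) => // k /= hk.
have : lam ^+ 2 * (2 * y) <= k%:R.
  by apply: le_trans (ltW (archi_boundP c_ge0)) _; rewrite ler_nat.
rewrite -ler_pdivlMr; last lra.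
move=> lam2_le; have : `|lam| <= Num.sqrt (k%:R / (2 * y)).
  by rewrite -sqrtr_sqr ler_sqrt // (le_trans _ lam2_le) // sqr_ge0.
by rewrite /ykx => h; have := ler_norm (- lam); rewrite normrN; lra.
Qed.

End LastPassage.

Section BoundaryData.
Variables (R : realType) (d : measure_display) (Omega : measurableType d).
Variables (P : Omega -> nat -> R -> R) (S : Omega -> R -> R -> R).

Lemma bdry_seq_quadrangle w (lam y y' : R) (i j : nat) :
  (forall q, continuous (P w q)) -> (i <= j)%N -> 0 < y -> y < y' ->
  \forall k \near \oo,
    bdry_seq P S w lam y' i k - bdry_seq P S w lam y i k
    <= bdry_seq P S w lam y' j k - bdry_seq P S w lam y j k.
Proof.
move=> Pc ij y0 yy'; have y'0 := lt_trans y0 yy'.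
near=> k; rewrite /bdry_seq.
have ijk : (i <= j <= k)%N by rewrite ij /=; near: k; exists j.
have left_of_lam : ykx y' k <= lam by near: k; exact: ykx_eventually_le.
have := lpp_quadrangle Pc (ykx_le y y' k y0 (ltW yy')) left_of_lam ijk.
lra.
Unshelve. all: end_near.
Qed.

End BoundaryData.

Theorem corollary2p5 (R : realType) (d : measure_display) (Omega : measurableType d)
    (Pr : probability Omega R) (P : Omega -> nat -> R -> R) (S : Omega -> R -> R -> R) :
  is_parabolic_airy_line_ensemble Pr P ->
  is_airy_sheet_coupled Pr P S ->
  (* known fact: for fixed lambda, y > 0, i >= 1 the limits defining b exist a.s. *)
  (forall (lam y : R) (i : nat), 0 < y -> (1 <= i)%N ->
     {ae Pr, forall w, cvgn (bdry_seq P S w lam y i)}) ->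
  forall (lam : R) (i j : nat) (y y' : R),
    (1 <= i)%N -> (i <= j)%N -> 0 < y -> y < y' ->
    {ae Pr, forall w,
       bdata P S w lam y' i - bdata P S w lam y i
       <= bdata P S w lam y' j - bdata P S w lam y j}.
Proof.
move=> [Pc _ _ _] _ bcvg lam i j y y' i1 ij y0 yy'.
have y'0 := lt_trans y0 yy'; have j1 := leq_trans i1 ij.
have cvg_i : {ae Pr, forall w,
    cvgn (bdry_seq P S w lam y' i) /\ cvgn (bdry_seq P S w lam y i)}.
  by apply: filterS2 (bcvg lam y' i y'0 i1) (bcvg lam y i y0 i1) => w ci' ci; split.
have cvg_j : {ae Pr, forall w,
    cvgn (bdry_seq P S w lam y' j) /\ cvgn (bdry_seq P S w lam y j)}.
  by apply: filterS2 (bcvg lam y' j y'0 j1) (bcvg lam y j y0 j1) => w cj' cj; split.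
apply: filterS2 cvg_i cvg_j => w [ci' ci] [cj' cj].
rewrite /bdata -!limB //.
by apply: ler_lim; [exact: is_cvgB | exact: is_cvgB | exact: bdry_seq_quadrangle].
Qed.
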